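(* Every ordered graph $G$ with at least one edge has an edge $e$ with $\mathrm{h}_G(e)\ge \overline{d}(G)/2$.
   Context: An ordered graph is a finite simple graph $G$ equipped with a total order $\le_G$ on $E(G)$ and a total order $\le^V_G$ on $V(G)$. Let $\mathbb N=\{1,2,\dots\}$. Define $\preceq_{\mathrm{lex}}$ on $\mathbb N\times V(G)$ by $(i,v)\preceq_{\mathrm{lex}}(i',v')$ iff $i<i'$, or $i=i'$ and $v\le^V_G v'$. The height table $\mathrm{HT}(G)$ is a partially filled array indexed by $\mathbb N\times V(G)$, built by going through all $(i,v)$ in $\preceq_{\mathrm{lex}}$-increasing order and setting the entry at $(i,v)$ to be the $\le_G$-largest edge containing $v$ not yet entered into the table (blank if none remain). Every edge is entered exactly once; $\mathrm{h}_G(e)$ denotes the row of $\mathrm{HT}(G)$ containing $e$. $\overline{d}(G)=2|E(G)|/|V(G)|$ is the average degree. *)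

From mathcomp Require Import all_boot all_order all_algebra.
Set Implicit Arguments. Unset Strict Implicit. Unset Printing Implicit Defensive.

(* An ordered graph: vertex set = all of the finType T, with vertex order leV;
   edge set E : {set {set T}} (each edge a 2-element set), with edge order leE. *)
Section HeightTable.
Variables (T : finType) (leV : rel T) (E : {set {set T}}) (leE : rel {set T}).

Definition vertex_seq : seq T := sort leV (enum T).

Definition top_edge (R : {set {set T}}) (v : T) : option {set T} :=
  [pick e in R | (v \in e) && [forall f in R, (v \in f) ==> leE f e]].

(* state: (edges not yet entered, row assigned to each entered edge) *)
Definition ht_state := ({set {set T}} * ({set T} -> nat))%type.

Definition ht_cell (i : nat) (st : ht_state) (v : T) : ht_state :=
  let: (R, h) := st in
  match top_edge R v with
  | Some e => (R :\ e, fun f => if f == e then i else h f)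
  | None => st
  end.

Definition ht_row (st : ht_state) (i : nat) : ht_state :=
  foldl (ht_cell i) st vertex_seq.

Definition ht_rows (n : nat) : ht_state :=
  foldl ht_row (E, fun _ => 0%N) (iota 1 n).

(* h_G(e): the row of HT(G) containing e.  Rows beyond #|E| are all blank,
   since every nonblank row enters at least one edge. *)
Definition height (e : {set T}) : nat := (ht_rows #|E|).2 e.

End HeightTable.

(* Every cell of the height table holds at most one edge, so the first n rows
   hold at most n|V| edges.  While edges remain, a vertex of a remaining edge
   enters an edge into the next row, so rows are nonblank up to some last row m
   and then blank.  Hence |E| <= m|V|, and an edge entered in row m has height
   m >= |E|/|V| = d(G)/2. *)

From mathcomp Require Import all_boot all_order all_algebra.

Set Implicit Arguments.
Unset Strict Implicit.
Unset Printing Implicit Defensive.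

Import GRing.Theory Num.Theory.

Lemma seq_greatest_in (X : eqType) (P : {pred X}) (r : rel X) (s : seq X) :
  {in P &, total r} -> {in P & &, transitive r} -> all P s -> s != [::] ->
  exists2 x, x \in s & {in s, forall y, r y x}.
Proof.
move=> r_tot r_tr Ps s_nil.
pose r' := fun x y => r y x.
have r'_tot : {in P &, total r'} by move=> x y xP yP; rewrite /r' orbC r_tot.
have r'_tr : {in P & &, transitive r'}.
  by move=> y x z yP xP zP /= xy yz; exact: r_tr yz xy.
have P_sort : all P (sort r' s) by rewrite all_sort.
case def_t: (sort r' s) (sort_sorted_in r'_tot Ps) P_sort => [|x t] t_sorted Pt.
  by move: s_nil; rewrite -size_eq0 -(size_sort r') def_t.
have s_t : s =i x :: t by move=> y; rewrite -def_t mem_sort.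
exists x; first by rewrite s_t mem_head.
have /allP x_top := order_path_min_in r'_tr Pt t_sorted.
move=> y; rewrite s_t inE => /orP[/eqP->|/x_top//].
by case/andP: Pt => xP _; rewrite -[r x x]orbb r_tot.
Qed.

Lemma exists_last_true (P : pred nat) (n : nat) :
  P 0 -> ~~ P n -> exists k, P k && ~~ P k.+1.
Proof.
move=> P0; elim: n => [|n IHn] Pn; first by rewrite P0 in Pn.
by case Pn': (P n); [exists n; rewrite Pn' | apply: IHn; rewrite Pn'].
Qed.

Section HeightTableProperties.
Variables (T : finType) (leV : rel T) (E : {set {set T}}) (leE : rel {set T}).
Hypothesis leE_total : {in E &, total leE}.
Hypothesis leE_trans : {in E & &, transitive leE}.
Hypothesis set0_notin_E : set0 \notin E.

Lemma top_edge_in (R : {set {set T}}) v e :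
  top_edge leE R v = Some e -> e \in R.
Proof. by rewrite /top_edge; case: pickP => // f /andP[fR _] [<-]. Qed.

Lemma top_edge_exists (R : {set {set T}}) v e :
  R \subset E -> e \in R -> v \in e -> top_edge leE R v != None.
Proof.
move=> RE eR ve; pose s := [seq f : {set T} <- enum R | v \in f].
have sE : all (mem E) s.
  by apply/allP=> f; rewrite mem_filter mem_enum => /andP[_ /(subsetP RE)].
have es : e \in s by rewrite mem_filter ve mem_enum.
have s_nil : s != [::] by apply/eqP=> s0; rewrite s0 in es.
have [g gs g_top] := seq_greatest_in leE_total leE_trans sE s_nil.
rewrite /top_edge; case: pickP => // /(_ g)/negbT/negP[].
move: gs; rewrite mem_filter mem_enum => /andP[-> ->] /=.
apply/forall_inP=> f fR; apply/implyP=> vf.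
by apply: g_top; rewrite mem_filter mem_enum vf.
Qed.

Definition enters (i k : nat) (st st' : ht_state T) : Prop :=
  [/\ st'.1 \subset st.1, #|st.1| <= #|st'.1| + k &
      forall f, st'.2 f = if f \in st.1 :\: st'.1 then i else st.2 f].

Lemma enters_refl i k st : enters i k st st.
Proof. by split=> [||f]; rewrite ?leq_addr ?setDv ?inE. Qed.

Lemma enters_trans i k k' st1 st2 st3 :
  enters i k st1 st2 -> enters i k' st2 st3 -> enters i (k + k') st1 st3.
Proof.
move=> [sub12 card12 h12] [sub23 card23 h23]; split.
- exact: subset_trans sub23 sub12.
- by apply: leq_trans card12 _; rewrite addnA addnAC leq_add2r.
- move=> f; rewrite h23 h12 !inE.
  case f3: (f \in st3.1).
    by rewrite (subsetP sub23 f f3) (subsetP sub12 f (subsetP sub23 f f3)).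
  by case f2: (f \in st2.1) => //=; rewrite (subsetP sub12 f f2).
Qed.

Lemma enters_cell i st v : enters i 1 st (ht_cell leE i st v).
Proof.
case: st => R h; rewrite /ht_cell.
case def_e: top_edge => [e|]; last exact: enters_refl.
have eR := top_edge_in def_e.
split=> /=; first exact: subsetDl.
  by rewrite (cardsD1 e R) eR addn1.
move=> f; rewrite !inE; case: (eqVneq f e) => [->|_]; first by rewrite eR.
by rewrite andNb.
Qed.

Lemma enters_foldl i st s : enters i (size s) st (foldl (ht_cell leE i) st s).
Proof.
elim: s st => [|v s IHs] st /=; first exact: enters_refl.
by rewrite -add1n; apply: enters_trans (enters_cell i st v) (IHs _).
Qed.

Lemma ht_cell_card_lt i (st : ht_state T) v e :
  st.1 \subset E -> e \in st.1 -> v \in e ->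
  #|(ht_cell leE i st v).1| < #|st.1|.
Proof.
case: st => R h /= RE eR ve; rewrite /ht_cell.
case def_f: top_edge (top_edge_exists RE eR ve) => [f|] //= _.
by rewrite (cardsD1 f R) (top_edge_in def_f).
Qed.

Lemma foldl_cell_card_lt i (st : ht_state T) s v e :
  st.1 \subset E -> e \in st.1 -> v \in e -> v \in s ->
  #|(foldl (ht_cell leE i) st s).1| < #|st.1|.
Proof.
move=> stE est ve /splitPr[s1 s2]; rewrite foldl_cat /=.
set st1 := foldl _ st s1.
have [sub1 _ _] := enters_foldl i st s1.
have [sub2 _ _] := enters_foldl i (ht_cell leE i st1 v) s2.
have [sub_v _ _] := enters_cell i st1 v.
apply: leq_ltn_trans (subset_leq_card sub2) _.
have [e1|e1] := boolP (e \in st1.1).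
  apply: leq_trans (subset_leq_card sub1).
  exact: ht_cell_card_lt (subset_trans sub1 stE) e1 ve.
apply: leq_ltn_trans (subset_leq_card sub_v) (proper_card _).
by apply/properP; split => //; exists e.
Qed.

Lemma enters_row i (st : ht_state T) : enters i #|T| st (ht_row leV leE st i).
Proof.
by have := enters_foldl i st (vertex_seq leV); rewrite size_sort -cardT.
Qed.

Lemma ht_row_card_lt i (st : ht_state T) :
  st.1 \subset E -> st.1 != set0 -> #|(ht_row leV leE st i).1| < #|st.1|.
Proof.
move=> stE /set0Pn[e est].
have /set0Pn[v ve] : e != set0.
  by apply: contraNneq set0_notin_E => <-; exact: subsetP stE e est.
by apply: foldl_cell_card_lt stE est ve _; rewrite mem_sort mem_enum.
Qed.

Lemma ht_row_set0 i h : ht_row leV leE (set0, h) i = (set0, h).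
Proof.
have cell0 v : ht_cell leE i (set0, h) v = (set0, h).
  by rewrite /ht_cell /top_edge; case: pickP => // f; rewrite inE.
rewrite /ht_row; elim: (vertex_seq leV) => // v s IHs.
exact: etrans (congr1 (foldl (ht_cell leE i)^~ s) (cell0 v)) IHs.
Qed.

Lemma ht_rowsS n :
  ht_rows leV E leE n.+1 = ht_row leV leE (ht_rows leV E leE n) n.+1.
Proof. by rewrite /ht_rows -[X in iota _ X]addn1 iotaD foldl_cat add1n. Qed.

Local Notation rows n := (ht_rows leV E leE n).

Lemma rows_sub n : (rows n).1 \subset E.
Proof.
elim: n => [|n IHn]; first exact: subxx.
have [sub _ _] := enters_row n.+1 (rows n).
by rewrite ht_rowsS; apply: subset_trans sub IHn.
Qed.

Lemma card_E_le_rows n : #|E| <= #|(rows n).1| + n * #|T|.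
Proof.
elim: n => [|n IHn]; first by rewrite addn0.
rewrite ht_rowsS mulSn addnA; have [_ card_le _] := enters_row n.+1 (rows n).
by apply: leq_trans IHn _; rewrite leq_add2r.
Qed.

Lemma rows_card_ub n : (rows n).1 != set0 -> #|(rows n).1| + n <= #|E|.
Proof.
elim: n => [|n IHn]; first by rewrite addn0.
rewrite ht_rowsS => ne.
have ne_n : (rows n).1 != set0.
  apply: contraNneq ne; case: (rows n) => R h /= ->.
  by rewrite ht_row_set0 /= eqxx.
apply: leq_trans (IHn ne_n); rewrite addnS -addSn leq_add2r.
exact: ht_row_card_lt (rows_sub n) ne_n.
Qed.

Lemma rows_exhausted : (rows #|E|).1 = set0.
Proof.
apply/eqP; apply: contraT => ne; have := rows_card_ub ne.
by rewrite -[X in _ <= X]add0n leq_add2r leqn0 cards_eq0 (negbTE ne).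
Qed.

Lemma rows_stable m n : (rows m).1 = set0 -> m <= n -> rows n = rows m.
Proof.
move=> Rm /subnKC <-; elim: (n - m) => [|k IHk]; first by rewrite addn0.
rewrite addnS ht_rowsS IHk.
by case: (rows m) Rm => R h /= ->; apply: ht_row_set0.
Qed.

Lemma height_last_row k e :
  e \in (rows k).1 -> (rows k.+1).1 = set0 -> height leV E leE e = k.+1.
Proof.
move=> eRk Rk1.
have ne : (rows k).1 != set0 by apply/set0Pn; exists e.
have k_lt : k < #|E|.
  by apply: leq_trans (rows_card_ub ne); rewrite -add1n leq_add2r card_gt0.
rewrite /height (rows_stable Rk1 k_lt) ht_rowsS.
have [_ _ ->] := enters_row k.+1 (rows k).
by rewrite -ht_rowsS Rk1 setD0 eRk.
Qed.

End HeightTableProperties.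

Local Open Scope ring_scope.

Lemma half_avg_degree_le (R : numFieldType) (m n d : nat) :
  (0 < n)%N -> (m <= d * n)%N -> (2 * m)%:R / n%:R / 2 <= d%:R :> R.
Proof.
move=> n_gt0 m_le; rewrite ler_pdivrMr // ler_pdivrMr ?ltr0n // -!natrM ler_nat.
by rewrite mulnC mulnAC leq_mul2r m_le orbT.
Qed.

Theorem lemma3p5 (T : finType) (leV : rel T) (E : {set {set T}})
    (leE : rel {set T}) :
  (forall e, e \in E -> #|e| = 2%N) ->
  total leV -> transitive leV -> antisymmetric leV ->
  {in E &, total leE} -> {in E & &, transitive leE} ->
  {in E &, antisymmetric leE} ->
  E != set0 ->
  exists2 e, e \in E &
    ((2 * #|E|)%:R / #|T|%:R) / 2 <= (height leV E leE e)%:R :> rat.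
Proof.
move=> edge_card2 _ _ _ leE_total leE_trans _ E_ne.
have set0_notin_E : set0 \notin E by apply/negP => /edge_card2; rewrite cards0.
pose nonblank n := (ht_rows leV E leE n).1 != set0.
have [k /andP[Rk /negPn/eqP Rk1]] : exists k, nonblank k && ~~ nonblank k.+1.
  apply: (@exists_last_true _ #|E|) => //.
  by rewrite /nonblank rows_exhausted ?eqxx.
have [e eRk] := set0Pn _ Rk.
have eE : e \in E := subsetP (rows_sub leV E leE k) e eRk.
exists e => //.
rewrite (height_last_row leE_total leE_trans set0_notin_E eRk Rk1).
apply: half_avg_degree_le.
  by apply: leq_trans (max_card e); rewrite edge_card2.
by have := card_E_le_rows leV E leE k.+1; rewrite Rk1 cards0.
Qed.
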